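(* For every $d\ge1$, the maximum of the index $[D_{2d}:L]$, over all sublattices $L$ of $D_{2d}$ generated by $2d$ linearly independent roots of $D_{2d}$, equals $2^{d-1}$.
   Context: $D_n=\{x\in\mathbb Z^n:\sum_ix_i\equiv0\pmod2\}$ with the standard inner product; its roots are its vectors of squared length $2$, i.e. $\pm b_i\pm b_j$ ($i\ne j$) for the standard basis $b_1,\dots,b_n$. *)

From HB Require Import structures.
From mathcomp Require Import all_boot all_order all_algebra.
Set Implicit Arguments. Unset Strict Implicit. Unset Printing Implicit Defensive.
Import Order.TTheory GRing.Theory Num.Theory.
Local Open Scope ring_scope.

Definition inD (n : nat) (x : 'rV[int]_n) : Prop :=
  (2 %| \sum_(i < n) x 0 i)%Z.

Definition is_root_Dn (n : nat) (x : 'rV[int]_n) : Prop :=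
  inD x /\ \sum_(i < n) x 0 i ^+ 2 = 2.

Definition in_lattice (m n : nat) (M : 'M[int]_(m, n)) (x : 'rV[int]_n) : Prop :=
  exists c : 'rV[int]_m, x = c *m M.

(* The index [D_n : L] equals k, where L is the lattice spanned by the rows
   of M: there are exactly k cosets of L in D_n, i.e. a list of k elements of
   D_n, pairwise incongruent modulo L, meeting every coset of L in D_n. *)
Definition index_in_Dn (m n : nat) (M : 'M[int]_(m, n)) (k : nat) : Prop :=
  exists s : seq 'rV[int]_n,
    [/\ size s = k,
        (forall x, x \in s -> inD x),
        (forall i j, (i < size s)%N -> (j < size s)%N -> i <> j ->
            ~ in_lattice M (nth 0 s i - nth 0 s j))
      & (forall x, inD x -> exists2 y, y \in s & in_lattice M (x - y))].

Definition rows_lin_indep (m n : nat) (M : 'M[int]_(m, n)) : bool :=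
  row_free (map_mx (fun z : int => (z%:~R : rat)) M).

From HB Require Import structures.
From mathcomp Require Import all_boot all_order all_algebra.
From mathcomp Require Import zify.
Import Order.TTheory GRing.Theory Num.Theory.

(* If L is spanned by the rows of M, then [D_n : L] = |det M| / 2, since D_n has
   index 2 in Z^n; the index of a sublattice C B of the lattice with basis B is
   |det C|, read off the Smith normal form of C.  A root has two entries equal to
   +-1 and all others 0, and for such integer rows a cofactor expansion along the
   first row gives Hadamard's bound det^2 <= 2^n: when both nonzero columns of
   the first row meet another row, each of the two minors loses a factor 2 in
   the product of squared row norms.  Hence [D_2d : L] <= 2^d / 2.  Equality holds
   for the d orthogonal blocks [[1, 1], [1, -1]], whose Gram matrix is 2 I. *)

Set Implicit Arguments.
Unset Strict Implicit.
Unset Printing Implicit Defensive.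
Local Open Scope ring_scope.

Lemma sqr_int_cases (z : int) : z ^+ 2 = 0 \/ z ^+ 2 = 1 \/ 4 <= z ^+ 2.
Proof.
rewrite expr2.
have [->|[[->|->]|z_big]] : z = 0 \/ (z = 1 \/ z = -1) \/ (2 <= z \/ z <= -2) by lia.
- by left.
- by right; left.
- by right; left.
- by right; right; nia.
Qed.

Lemma sqr_addr_le (x y : int) : (x + y) ^+ 2 <= 2 * (x ^+ 2 + y ^+ 2).
Proof. have := sqr_ge0 (x - y); rewrite sqrrB sqrrD; lia. Qed.

Lemma sum_only1 (I : finType) (F : I -> int) (i0 : I) :
  (forall i, i != i0 -> F i = 0) -> \sum_i F i = F i0.
Proof. by move=> F0; rewrite (bigD1 i0) //= big1 ?addr0 // => i /F0. Qed.

Lemma sum_only2 (I : finType) (F : I -> int) (i0 i1 : I) : i0 != i1 ->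
  (forall i, i != i0 -> i != i1 -> F i = 0) -> \sum_i F i = F i0 + F i1.
Proof.
move=> i01 F0; rewrite (bigD1 i0) //= (bigD1 i1) /= ?big1 ?addr0 1?eq_sym //.
by move=> i /andP[]; apply: F0.
Qed.

Lemma sum_sqr_eq0 (I : finType) (P : pred I) (a : I -> int) :
  \sum_(i | P i) a i ^+ 2 = 0 -> forall i, P i -> a i = 0.
Proof.
move=> /(psumr_eq0P (fun i _ => sqr_ge0 (a i))) a0 i /a0 /eqP.
by rewrite sqrf_eq0 => /eqP.
Qed.

Lemma sum_sqr_eq1 (I : finType) (P : pred I) (a : I -> int) :
  \sum_(i | P i) a i ^+ 2 = 1 ->
  exists i0, [/\ P i0, a i0 ^+ 2 = 1 & forall i, P i -> i != i0 -> a i = 0].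
Proof.
move=> sum1.
have [i0 /andP[Pi0 ai0]|a0] := pickP (fun i => P i && (a i != 0)); last first.
  move: sum1; rewrite big1 // => i Pi.
  by have := a0 i; rewrite Pi /= => /negbFE/eqP ->; rewrite expr0n.
have rest0 : 0 <= \sum_(i | P i && (i != i0)) a i ^+ 2.
  by apply: sumr_ge0 => i _; apply: sqr_ge0.
move: sum1; rewrite (bigD1 i0) //=.
have [ai0_0|[ai0_1|ai0_4]] := sqr_int_cases (a i0).
- by move/eqP: ai0_0; rewrite sqrf_eq0 (negbTE ai0).
- rewrite ai0_1 -[RHS]addr0 => /addrI rest_0; exists i0; split=> // i Pi ii0.
  by apply: (sum_sqr_eq0 rest_0); rewrite Pi ii0.
- by move: ai0_4 rest0; set x := a i0 ^+ 2; set y := \sum_(_ | _) _; lia.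
Qed.

Lemma sum_sqr_eq2 (I : finType) (a : I -> int) : \sum_i a i ^+ 2 = 2 ->
  exists i0 i1, [/\ i0 != i1, a i0 ^+ 2 = 1, a i1 ^+ 2 = 1
                  & forall i, i != i0 -> i != i1 -> a i = 0].
Proof.
move=> sum2.
have [i0 ai0|a0] := pickP (fun i => a i != 0); last first.
  by move: sum2; rewrite big1 // => i _; have /negbFE/eqP-> := a0 i; rewrite expr0n.
have rest0 : 0 <= \sum_(i | i != i0) a i ^+ 2 by apply: sumr_ge0 => i _; apply: sqr_ge0.
move: sum2; rewrite (bigD1 i0) //=.
have [ai0_0|[ai0_1|ai0_4]] := sqr_int_cases (a i0).
- by move/eqP: ai0_0; rewrite sqrf_eq0 (negbTE ai0).
- rewrite ai0_1 => sum2; have rest1 : \sum_(i | i != i0) a i ^+ 2 = 1.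
    by move: sum2; set y := \sum_(_ | _) _; lia.
  have [i1 [i1i0 ai1 a0]] := sum_sqr_eq1 rest1.
  by exists i0, i1; split; rewrite 1?eq_sym // => i ii0 ii1; apply: a0.
- by move: ai0_4 rest0; set x := a i0 ^+ 2; set y := \sum_(_ | _) _; lia.
Qed.

Definition row_sqnorm m n (A : 'M[int]_(m, n)) i := \sum_j A i j ^+ 2.

Lemma row_sqnorm_ge0 m n (A : 'M[int]_(m, n)) i : 0 <= row_sqnorm A i.
Proof. by apply: sumr_ge0 => j _; apply: sqr_ge0. Qed.

Definition top_minor (R : Type) n (A : 'M[R]_n.+1) j : 'M[R]_n := row' 0 (col' j A).

Lemma row_sqnorm_top_minor n (A : 'M[int]_n.+1) j k :
  row_sqnorm (top_minor A j) k = row_sqnorm A (lift 0 k) - A (lift 0 k) j ^+ 2.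
Proof.
rewrite /row_sqnorm [in RHS](bigD1_ord j) //= addrAC subrr add0r.
by apply: eq_bigr => i _; rewrite !mxE.
Qed.

Lemma sqr_cofactor0 (R : comRingType) n (A : 'M[R]_n.+1) j :
  cofactor A 0 j ^+ 2 = \det (top_minor A j) ^+ 2.
Proof. by rewrite /cofactor exprMn -exprM mulnC exprM sqrrN !expr1n mul1r. Qed.

Lemma prod_le_half n (m r : 'I_n -> int) k :
  (forall i, 0 <= m i <= r i) -> m k + 1 <= r k <= 2 ->
  2 * \prod_i m i <= \prod_i r i.
Proof.
move=> mr /andP[mk rk]; rewrite (bigD1 k) //= [leRHS](bigD1 k) //=.
have le_rest : \prod_(i | i != k) m i <= \prod_(i | i != k) r i.
  by apply: ler_prod => i _; apply: mr.
have rest0 : 0 <= \prod_(i | i != k) m i.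
  by apply: prodr_ge0 => i _; case/andP: (mr i).
have /andP[mk0 _] := mr k; move: le_rest rest0.
by set x := \prod_(_ | _) m _; set y := \prod_(_ | _) r _; nia.
Qed.

Section TopMinor.

Variables (n : nat) (A : 'M[int]_n.+1).
Hypothesis A_small : forall i, row_sqnorm A i <= 2.

Let tail_prod := \prod_(k < n) row_sqnorm A (lift 0 k).

Lemma top_minor_row_bounds j k :
  0 <= row_sqnorm (top_minor A j) k <= row_sqnorm A (lift 0 k).
Proof.
rewrite row_sqnorm_top_minor; have := sqr_ge0 (A (lift 0 k) j).
have := row_sqnorm_ge0 (top_minor A j) k; rewrite row_sqnorm_top_minor.
by set x := row_sqnorm _ _; set y := _ ^+ 2; lia.
Qed.

Lemma top_minor_prod_le j : \prod_k row_sqnorm (top_minor A j) k <= tail_prod.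
Proof. by apply: ler_prod => k _; apply: top_minor_row_bounds. Qed.

Lemma top_minor_prod_half j k : A (lift 0 k) j != 0 ->
  2 * \prod_k row_sqnorm (top_minor A j) k <= tail_prod.
Proof.
move=> Akj; apply: (prod_le_half (k := k) (fun i => top_minor_row_bounds j i)).
rewrite row_sqnorm_top_minor A_small andbT.
have [/eqP|[->|big]] := sqr_int_cases (A (lift 0 k) j).
- by rewrite sqrf_eq0 (negbTE Akj).
- by rewrite subrK.
- by move: big (A_small (lift 0 k)); set x := row_sqnorm _ _; set y := _ ^+ 2; lia.
Qed.

End TopMinor.

Lemma det_sqr_top_column (R : comRingType) n (A : 'M[R]_n.+1) j :
  (forall k, A (lift 0 k) j = 0) ->
  \det A ^+ 2 = A 0 j ^+ 2 * \det (top_minor A j) ^+ 2.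
Proof.
move=> Aj0; rewrite (expand_det_col A j) (bigD1 0) //= big1 ?addr0.
  by rewrite exprMn sqr_cofactor0.
by move=> i; case: (unliftP 0 i) => [k ->|->]; rewrite ?eqxx // Aj0 mul0r.
Qed.

Lemma det_sqr_le_prod_row_sqnorm n (A : 'M[int]_n) :
  (forall i, row_sqnorm A i <= 2) -> \det A ^+ 2 <= \prod_i row_sqnorm A i.
Proof.
elim: n A => [|n IH] A A_small; first by rewrite det_mx00 big_ord0 expr1n.
set P := \prod_(k < n) row_sqnorm A (lift 0 k).
have -> : \prod_i row_sqnorm A i = row_sqnorm A 0 * P by rewrite big_ord_recl.
have P_ge0 : 0 <= P by apply: prodr_ge0 => k _; apply: row_sqnorm_ge0.
have minor_small j k : row_sqnorm (top_minor A j) k <= 2.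
  by case/andP: (top_minor_row_bounds A j k) => _ /le_trans; apply.
have minor_le j : \det (top_minor A j) ^+ 2 <= P.
  exact: le_trans (IH _ (minor_small j)) (top_minor_prod_le A j).
have minor_half j k : A (lift 0 k) j != 0 -> 2 * \det (top_minor A j) ^+ 2 <= P.
  move=> Akj; apply: le_trans (top_minor_prod_half A_small Akj).
  by rewrite ler_pM2l // IH.
have cof_le j : A 0 j ^+ 2 = 1 -> (A 0 j * cofactor A 0 j) ^+ 2 <= P.
  by move=> Aj; rewrite exprMn Aj mul1r sqr_cofactor0.
rewrite (expand_det_row A 0).
have : row_sqnorm A 0 = 0 \/ row_sqnorm A 0 = 1 \/ row_sqnorm A 0 = 2.
  by move: (A_small 0) (row_sqnorm_ge0 A 0); set x := row_sqnorm _ _; lia.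
case=> [r0|[r1|r2]].
- rewrite big1 ?expr0n ?r0 ?mul0r // => j _.
  by rewrite (sum_sqr_eq0 r0) ?mul0r.
- have [j0 [_ Aj0 A0]] := sum_sqr_eq1 r1.
  rewrite (sum_only1 (i0 := j0)) ?r1 ?mul1r ?cof_le // => j jj0.
  by rewrite A0 ?mul0r.
- have [j0 [j1 [j01 Aj0 Aj1 A0]]] := sum_sqr_eq2 r2.
  rewrite -(expand_det_row A 0) r2.
  have P_le2 : P <= 2 * P by lia.
  have col_only_top j : A 0 j ^+ 2 = 1 -> (forall k, A (lift 0 k) j = 0) ->
      \det A ^+ 2 <= 2 * P.
    move=> Aj col0; rewrite (det_sqr_top_column col0) Aj mul1r.
    exact: le_trans (minor_le j) P_le2.
  have [k0 Ak0|/(_ _)/negbFE/eqP] := pickP (fun k => A (lift 0 k) j0 != 0);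
    last exact: col_only_top.
  have [k1 Ak1|/(_ _)/negbFE/eqP] := pickP (fun k => A (lift 0 k) j1 != 0);
    last exact: col_only_top.
  rewrite (expand_det_row A 0) (sum_only2 j01) => [|j jj0 jj1]; last first.
    by rewrite A0 ?mul0r.
  apply: le_trans (sqr_addr_le _ _) _.
  rewrite [(A 0 j0 * _) ^+ 2]exprMn [(A 0 j1 * _) ^+ 2]exprMn Aj0 Aj1 !mul1r.
  rewrite !sqr_cofactor0.
  move: (minor_half _ _ Ak0) (minor_half _ _ Ak1).
  by set x := \det _ ^+ 2; set y := \det _ ^+ 2; lia.
Qed.

Lemma dvdz_subn_small (x y : nat) (e : int) :
  (x < `|e|)%N -> (y < `|e|)%N -> (e %| x%:Z - y%:Z)%Z -> x = y.
Proof.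
move=> x_lt y_lt; rewrite -eqz_mod_dvd -!(modz_abs _ e) !modz_small ?ltz_nat //.
by move/eqP => [].
Qed.

Lemma mulmxI_det (R : idomainType) m n (B : 'M[R]_n) (a b : 'M[R]_(m, n)) :
  \det B != 0 -> a *m B = b *m B -> a = b.
Proof.
move=> B_nz /(congr1 (mulmx^~ (\adj B))); rewrite -!mulmxA mul_mx_adj !mul_mx_scalar.
by move/matrixP => ab; apply/matrixP => i j; move: (ab i j); rewrite !mxE => /mulfI; apply.
Qed.

Lemma absz_det_unitmx n (U : 'M[int]_n) : U \in unitmx -> absz (\det U) = 1%N.
Proof. by rewrite unitmxE => /orP[] /eqP ->. Qed.

Section SmithCosets.

Variables (n : nat) (P Q : 'M[int]_n) (e : 'rV[int]_n).
Hypotheses (P_unit : P \in unitmx) (Q_unit : Q \in unitmx).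
Hypothesis e_nz : forall i, e 0 i != 0.

Let C := P *m diag_mx e *m Q.

Definition box := {dffun forall i : 'I_n, 'I_`|e 0 i|}.

Definition box_vec (t : box) : 'rV[int]_n := \row_i (t i : nat)%:Z.

Lemma card_box : #|box| = absz (\prod_i e 0 i).
Proof.
rewrite card_dep_ffun foldrE big_map big_enum /=.
rewrite (big_morph (fun z : int => `|z|%N) abszM (erefl _)).
by apply: eq_bigr => i _; rewrite card_ord.
Qed.

Lemma box_vec_congr t t' c : (box_vec t - box_vec t') *m Q = c *m C -> t = t'.
Proof.
move=> /(congr1 (mulmx^~ (invmx Q))); rewrite /= mulmxK // /C !mulmxA mulmxK //.
move=> /rowP diff; apply/ffunP => i; apply: val_inj.
apply: dvdz_subn_small (ltn_ord _) (ltn_ord _) _.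
by move: (diff i); rewrite mul_mx_diag !mxE => ->; apply: dvdz_mull.
Qed.

Lemma box_vec_cover w : exists t u, w = box_vec t *m Q + u *m C.
Proof.
have [v ->] : exists v, w = v *m Q by exists (w *m invmx Q); rewrite mulmxKV.
have rem_lt i : (absz (modz (v ord0 i) (e ord0 i)) < absz (e ord0 i))%N.
  by rewrite -ltz_nat !abszE ger0_norm ?modz_ge0 ?ltz_mod.
exists (finfun (fun i => Ordinal (rem_lt i))).
exists (\row_i divz (v 0 i) (e 0 i) *m invmx P).
rewrite /C !mulmxA mulmxKV // -mulmxDl; congr (_ *m _).
apply/rowP => i; rewrite mul_mx_diag !mxE ffunE /= gez0_abs ?modz_ge0 //.
by rewrite addrC -divz_eq.
Qed.

End SmithCosets.

Lemma lattice_index_mul n (B C : 'M[int]_n) : \det B != 0 -> \det C != 0 ->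
  exists s : seq 'rV[int]_n,
    [/\ size s = absz (\det C),
        (forall x, x \in s -> in_lattice B x),
        (forall i j, (i < size s)%N -> (j < size s)%N -> i <> j ->
            ~ in_lattice (C *m B) (nth 0 s i - nth 0 s j))
      & (forall x, in_lattice B x -> exists2 y, y \in s & in_lattice (C *m B) (x - y))].
Proof.
move=> B_nz C_nz; have [P P_unit [Q Q_unit [d _ C_def]]] := int_Smith_normal_form C.
pose e : 'rV[int]_n := \row_i d`_i.
have {}C_def : C = P *m diag_mx e *m Q.
  by rewrite C_def; congr (_ *m _ *m _); apply/matrixP => i j; rewrite !mxE.
have det_C : \det C = \det P * \prod_i e 0 i * \det Q by rewrite C_def !det_mulmx det_diag.
have e_nz i : e 0 i != 0.
  by apply: contra C_nz => /eqP e0; rewrite det_C (bigD1 i) //= e0 mul0r mulr0 mul0r.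
pose f (t : box e) := box_vec t *m Q *m B.
have f_congr t t' c : f t - f t' = c *m (C *m B) -> t = t'.
  rewrite /f -!mulmxBl mulmxA => /(mulmxI_det B_nz).
  by rewrite C_def; apply: box_vec_congr.
pose s := [seq f t | t <- enum (box e)].
have s_uniq : uniq s.
  rewrite map_inj_in_uniq ?enum_uniq // => t t' _ _ ftt'.
  by apply: (f_congr t t' 0); rewrite ftt' subrr mul0mx.
exists s; split.
- rewrite size_map -cardE card_box det_C !abszM.
  by rewrite !absz_det_unitmx // mul1n muln1.
- by move=> x /mapP[t _ ->]; exists (box_vec t *m Q).
- move=> i j i_lt j_lt ij [c].
  have [t _ ti] := mapP (mem_nth 0 i_lt); have [t' _ tj] := mapP (mem_nth 0 j_lt).
  rewrite ti tj => /f_congr => tt'; apply: ij; apply/eqP.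
  by rewrite -(nth_uniq 0 i_lt j_lt s_uniq) ti tj tt'.
- move=> _ [a ->]; have [t [u a_def]] := box_vec_cover P_unit Q_unit e_nz a.
  exists (f t); first by apply: map_f; rewrite mem_enum.
  by exists u; rewrite /f a_def mulmxDl addrC addKr C_def !mulmxA.
Qed.

Definition Dn_basis n : 'M[int]_n.+1 :=
  \matrix_(i, j) if i == 0 then 2 * (j == 0)%:R else (j == i)%:R - (j == 0)%:R.

Lemma Dn_basis_mulE n (a : 'rV[int]_n.+1) j : (a *m Dn_basis n) 0 j =
  if j == 0 then 2 * a 0 0 - \sum_(k < n) a 0 (lift 0 k) else a 0 j.
Proof.
rewrite mxE big_ord_recl !mxE eqxx /=; case: (unliftP 0 j) => [k ->|->] /=.
- rewrite mulr0 add0r (sum_only1 (i0 := k)) => [|k' k'k].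
    by rewrite !mxE /= eqxx subr0 mulr1.
  by rewrite !mxE /= (inj_eq lift_inj) eq_sym (negbTE k'k) subr0 mulr0.
- rewrite mulr1 mulrC -sumrN; congr (_ + _); apply: eq_bigr => k _.
  by rewrite !mxE /= sub0r mulrN1.
Qed.

Lemma det_Dn_basis n : \det (Dn_basis n) = 2.
Proof.
rewrite det_trig.
  rewrite big_ord_recl big1 ?mulr1 => [|k _]; first by rewrite !mxE eqxx mulr1.
  by rewrite !mxE /= eqxx subr0.
apply/is_trig_mxP => i j ij; rewrite mxE.
have j_nz : (j == 0) = false by apply/eqP => j0; rewrite j0 ltn0 in ij.
have ji : (j == i) = false by apply/eqP => ji; rewrite ji ltnn in ij.
by rewrite j_nz ji mulr0 subr0; case: ifP.
Qed.

Lemma inD_mulmx_Dn_basis n (a : 'rV[int]_n.+1) : inD (a *m Dn_basis n).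
Proof.
rewrite /inD big_ord_recl Dn_basis_mulE eqxx.
have -> : \sum_(k < n) (a *m Dn_basis n) 0 (lift 0 k) = \sum_(k < n) a 0 (lift 0 k).
  by apply: eq_bigr => k _; rewrite Dn_basis_mulE.
by rewrite subrK dvdz_mulr.
Qed.

Definition Dn_coord n (x : 'rV[int]_n.+1) : 'rV[int]_n.+1 :=
  \row_j if j == 0 then divz (\sum_k x 0 k) 2 else x 0 j.

Lemma Dn_coordK n (x : 'rV[int]_n.+1) : inD x -> Dn_coord x *m Dn_basis n = x.
Proof.
move=> x_even; apply/rowP => j; rewrite Dn_basis_mulE.
case: ifPn => [/eqP ->|j_nz]; last by rewrite mxE (negbTE j_nz).
under eq_bigr do rewrite mxE /=.
by rewrite mxE eqxx mulrC divzK // big_ord_recl addrK.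
Qed.

Lemma inD_in_lattice n (x : 'rV[int]_n.+1) : inD x <-> in_lattice (Dn_basis n) x.
Proof.
split=> [x_even|[a ->]]; last exact: inD_mulmx_Dn_basis.
by exists (Dn_coord x); rewrite Dn_coordK.
Qed.

Lemma index_in_Dn_det n (M : 'M[int]_n) : (0 < n)%N ->
  (forall i, inD (row i M)) -> \det M != 0 ->
  exists k, index_in_Dn M k /\ (k * 2)%N = absz (\det M).
Proof.
case: n M => // n M _ M_even M_nz; pose C := \matrix_i Dn_coord (row i M).
have M_def : M = C *m Dn_basis n.
  by apply/row_matrixP => i; rewrite row_mul rowK Dn_coordK.
have det_M : \det M = \det C * 2 by rewrite M_def det_mulmx det_Dn_basis.
have C_nz : \det C != 0 by apply: contra M_nz; rewrite det_M => /eqP ->; rewrite mul0r.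
have B_nz : \det (Dn_basis n) != 0 by rewrite det_Dn_basis.
have [s [s_size s_in s_incongr s_cover]] := lattice_index_mul B_nz C_nz.
exists (absz (\det C)); split; last by rewrite det_M abszM.
exists s; rewrite M_def; split=> // x.
  by move/s_in/inD_in_lattice.
by move/inD_in_lattice/s_cover.
Qed.

Lemma is_root_Dn_row m n (A : 'M[int]_(m, n)) i :
  is_root_Dn (row i A) <-> (2 %| \sum_j A i j)%Z /\ row_sqnorm A i = 2.
Proof.
have entry j : row i A 0 j = A i j by rewrite mxE.
rewrite /is_root_Dn /inD /row_sqnorm; under eq_bigr do rewrite entry.
by under [in X in _ /\ X]eq_bigr do rewrite entry.
Qed.

Definition hadamard_blocks d : 'M[int]_(2 * d) :=
  \matrix_(i, j) if i./2 == j./2 then (-1) ^+ (odd i && odd j) else 0.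

Lemma half_pair d (i : 'I_(2 * d)) : exists j0 j1 : 'I_(2 * d),
  [/\ j0 != j1, val j0 = (i./2).*2, val j1 = (i./2).*2.+1
    & forall j : 'I_(2 * d), (i./2 == j./2) = (j == j0) || (j == j1)].
Proof.
have i_lt := ltn_ord i; have i_eq := odd_double_half i; rewrite -muln2 in i_eq.
have j0_lt : ((i./2).*2 < 2 * d)%N by rewrite -muln2; case: (odd i) i_eq => /=; lia.
have j1_lt : ((i./2).*2.+1 < 2 * d)%N by rewrite -muln2; case: (odd i) i_eq => /=; lia.
exists (Ordinal j0_lt), (Ordinal j1_lt); split=> // [|j].
  by rewrite -val_eqE /= neq_ltn ltnSn.
rewrite -!val_eqE /=; have := odd_double_half j; rewrite -!muln2.
case: (odd j) => /= j_eq; apply/eqP/orP => [->|[]/eqP]; lia.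
Qed.

Lemma hadamard_blocks_support d (i : 'I_(2 * d)) : exists j0 j1 : 'I_(2 * d),
  [/\ j0 != j1, forall k : 'I_(2 * d), hadamard_blocks d k j0 = (i./2 == k./2)%:R,
      forall k : 'I_(2 * d), hadamard_blocks d k j1 = (i./2 == k./2)%:R * (-1) ^+ odd k
    & forall j, j != j0 -> j != j1 -> hadamard_blocks d i j = 0].
Proof.
have [j0 [j1 [j01 j0_val j1_val pair]]] := half_pair i.
exists j0, j1; split=> // [k|k|j jj0 jj1]; rewrite mxE.
- by rewrite j0_val doubleK odd_double andbF eq_sym; case: eqP.
- rewrite j1_val /= uphalf_double odd_double andbT eq_sym.
  by case: eqP; rewrite ?mul1r ?mul0r.
- by rewrite pair (negbTE jj0) (negbTE jj1).
Qed.

Lemma hadamard_blocks_root d i : is_root_Dn (row i (hadamard_blocks d)).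
Proof.
have [j0 [j1 [j01 col0 col1 row0]]] := hadamard_blocks_support i.
have Mij0 := col0 i; have Mij1 := col1 i; rewrite eqxx mul1r in Mij0 Mij1.
apply/is_root_Dn_row; split.
- rewrite (sum_only2 j01) => [|j jj0 jj1]; last exact: row0.
  by rewrite Mij0 Mij1; case: (odd i).
- rewrite /row_sqnorm (sum_only2 j01) => [|j jj0 jj1]; last by rewrite row0 ?expr0n.
  by rewrite Mij0 Mij1; case: (odd i).
Qed.

Lemma hadamard_blocks_mul_tr d : hadamard_blocks d *m (hadamard_blocks d)^T = 2%:M.
Proof.
apply/matrixP => i k; rewrite mxE [2%:M i k]mxE.
have [j0 [j1 [j01 col0 col1 row0]]] := hadamard_blocks_support i.
rewrite (sum_only2 j01) => [|j jj0 jj1]; last by rewrite row0 ?mul0r.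
rewrite ![_^T _ _]mxE !col0 !col1 eqxx !mul1r.
case: (eqVneq (i./2) (k./2)) => [half_ik|half_ik]; last first.
  by rewrite mul0r mulr0 addr0; case: eqP => // ik; rewrite ik eqxx in half_ik.
have same_half_eq : (i == k) = (odd i == odd k).
  apply/eqP/eqP => [-> //|odd_ik]; apply: val_inj.
  by rewrite /= -(odd_double_half i) -(odd_double_half k) odd_ik half_ik.
by rewrite same_half_eq; case: (odd i); case: (odd k).
Qed.

Lemma rows_lin_indep_det n (M : 'M[int]_n) : rows_lin_indep M = (\det M != 0).
Proof. by rewrite /rows_lin_indep row_free_unit unitmxE unitfE det_map_mx intr_eq0. Qed.

Lemma absz_sqr_pow2 (z : int) m : absz (z ^+ 2) = absz (2 ^+ (2 * m)) ->
  absz z = (2 ^ m)%N.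
Proof. by rewrite !abszX mulnC expnM => /expIn; apply. Qed.

Lemma absz_le_pow2_sqr (z : int) m : z ^+ 2 <= 2 ^+ (2 * m) -> (absz z <= 2 ^ m)%N.
Proof.
rewrite -(@leq_exp2r _ _ 2) // -[(2 ^ m)%N]/(absz 2 ^ m)%N -!abszX -exprM mulnC.
by rewrite -lez_nat !gez0_abs ?sqr_ge0 ?exprn_ge0.
Qed.

Lemma absz_det_roots_le d (M : 'M[int]_(2 * d)) :
  (forall i, is_root_Dn (row i M)) -> (absz (\det M) <= 2 ^ d)%N.
Proof.
move=> roots; have row2 i : row_sqnorm M i = 2 by case/is_root_Dn_row: (roots i).
apply: absz_le_pow2_sqr.
have <- : \prod_(i < 2 * d) row_sqnorm M i = 2 ^+ (2 * d).
  by rewrite (eq_bigr _ (fun i _ => row2 i)) prodr_const card_ord.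
by apply: det_sqr_le_prod_row_sqnorm => i; rewrite row2.
Qed.

Lemma sqr_det_hadamard_blocks d : \det (hadamard_blocks d) ^+ 2 = 2 ^+ (2 * d).
Proof.
have := congr1 determinant (hadamard_blocks_mul_tr d).
by rewrite det_mulmx det_tr det_scalar -expr2.
Qed.

Theorem proposition15p2 (d : nat) (hd : (1 <= d)%N) :
  (forall M : 'M[int]_(2 * d),
      (forall i, is_root_Dn (row i M)) -> rows_lin_indep M ->
      exists k : nat, index_in_Dn M k /\ (k <= 2 ^ (d - 1))%N)
  /\
  (exists M : 'M[int]_(2 * d),
      [/\ (forall i, is_root_Dn (row i M)), rows_lin_indep M
        & index_in_Dn M (2 ^ (d - 1))]).
Proof.
have dim_pos : (0 < 2 * d)%N by rewrite muln_gt0.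
have two_pow : (2 ^ d = 2 ^ (d - 1) * 2)%N by rewrite -expnSr subn1 prednK.
split=> [M roots|].
  rewrite rows_lin_indep_det => M_nz.
  have [k [k_index k_det]] := index_in_Dn_det dim_pos (fun i => proj1 (roots i)) M_nz.
  exists k; split=> //; rewrite -(leq_pmul2r (isT : (0 < 2)%N)) k_det -two_pow.
  exact: absz_det_roots_le.
pose H := hadamard_blocks d.
have H_det2 := sqr_det_hadamard_blocks d.
have H_nz : \det H != 0 by rewrite -sqrf_eq0 H_det2 expf_neq0.
have [k [k_index k_det]] :=
  index_in_Dn_det dim_pos (fun i => proj1 (hadamard_blocks_root i)) H_nz.
exists H; split; [exact: hadamard_blocks_root | by rewrite rows_lin_indep_det |].
suff -> : (2 ^ (d - 1) = k)%N by [].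
apply/eqP; rewrite -(eqn_pmul2r (isT : (0 < 2)%N)) -two_pow k_det.
by rewrite (absz_sqr_pow2 (congr1 absz H_det2)).
Qed.
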